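(* For the estimators defined in the context (and assuming all matrices inverted below and in the context are invertible), $$\hat\tau_{\mathrm{pdd}}=\hat\tau^y_{\mathrm{rdd}}-(\hat\tau^w_{\mathrm{rdd}})^\top\hat\gamma_- \quad\text{exactly (numerically), for every sample.}$$ Moreover $$\hat\gamma_-=\Big[\tfrac1n\sum_{i=1}^n\omega_{i,-}Z_i(W_i^\perp)^\top\Big]^{-1}\Big\{\tfrac1n\sum_{i=1}^n\omega_{i,-}Z_iY_i^\perp\Big\}.$$ Here the residuals from local linear regressions on the running variable below the cutoff are $$Y_i^\perp=Y_i-R_{i,1}^\top\Big(\sum_{j}\omega_{j,-}R_{j,1}R_{j,1}^\top\Big)^{-1}\sum_j\omega_{j,-}R_{j,1}Y_j,$$ $$W_i^{\perp\top}=W_i^\top-R_{i,1}^\top\Big(\sum_{j}\omega_{j,-}R_{j,1}R_{j,1}^\top\Big)^{-1}\sum_j\omega_{j,-}R_{j,1}W_j^\top.$$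
   Context: Data and cutoff. The data are observations $(Y_i,W_i,D_i,Z_i)$, $i=1,\dots,n$, with $Y_i,D_i\in\mathbb{R}$ and $W_i,Z_i\in\mathbb{R}^q$. The cutoff $d^*$ is known. $K\ge0$ is a kernel and $h_n>0$ a bandwidth. Basic objects: - Kernel weights: $\omega_{i,+}=h_n^{-1}\mathbf{1}\{D_i\ge d^*\}K(|D_i-d^*|/h_n)$ and $\omega_{i,-}=h_n^{-1}\mathbf{1}\{D_i<d^*\}K(|D_i-d^*|/h_n)$. - $R_{i,1}=(1,(D_i-d^* )/h_n)^\top$ and $H_1=\mathrm{diag}(1,h_n)$. Local linear fits. For $v\in\{y,w_1,\dots,w_q\}$ (with corresponding data $Y_i$ or $W_{i,j}$) and $s\in\{+,-\}$, define $\hat\beta^v_s$ by $$H_1\hat\beta^v_s=\arg\min_\beta\sum_i\omega_{i,s}(V_i-R_{i,1}^\top\beta)^2.$$ Let $\hat\beta^v_{s,0}$ be its first component and $\hat\beta^w_{s,0}=(\hat\beta^{w_1}_{s,0},\dots,\hat\beta^{w_q}_{s,0})^\top$. Set $\hat\tau^y_{\mathrm{rdd}}=\hat\beta^y_{+,0}-\hat\beta^y_{-,0}$ and $\hat\tau^w_{\mathrm{rdd}}=\hat\beta^w_{+,0}-\hat\beta^w_{-,0}\in\mathbb{R}^q$. Local instrumental variable regression. For $s\in\{+,-\}$, $(\hat\alpha_s,\hat\gamma_s)\in\mathbb{R}^2\times\mathbb{R}^q$ solve $$\frac1n\sum_{i=1}^n\omega_{i,s}\begin{bmatrix}R_{i,1}\\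 Z_i\end{bmatrix}\big(Y_i-R_{i,1}^\top H_1\hat\alpha_s-W_i^\top\hat\gamma_s\big)=0,$$ and $\hat\alpha_{s,0}$ denotes the first component of $\hat\alpha_s$. Estimator. The placebo discontinuity estimator is $$\hat\tau_{\mathrm{pdd}}=\hat\alpha_{+,0}+(\hat\beta^w_{+,0})^\top\hat\gamma_+-\big\{\hat\alpha_{-,0}+(\hat\beta^w_{+,0})^\top\hat\gamma_-\big\}.$$ *)

From mathcomp Require Import all_boot all_order all_algebra.
Set Implicit Arguments. Unset Strict Implicit. Unset Printing Implicit Defensive.
Import Order.TTheory GRing.Theory Num.Theory.
Local Open Scope ring_scope.

Section PDD.
Variable R : realFieldType.
Variables (n q : nat).
(* kernel K, bandwidth h, cutoff d, running variable D *)
Variables (K : R -> R) (h d : R) (D : 'I_n -> R).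

Definition sc (A : 'M[R]_1) : R := A ord0 ord0.

Definition Rv (i : 'I_n) : 'cV[R]_2 :=
  \col_(k < 2) (if k == ord0 then 1 else (D i - d) / h).

Definition H1 : 'M[R]_2 :=
  \matrix_(a < 2, b < 2) (if a == b then (if a == ord0 then 1 else h) else 0).

(* kernel weights; pos = true gives omega_{i,+}, pos = false gives omega_{i,-} *)
Definition omega (pos : bool) (i : 'I_n) : R :=
  h^-1 * (if (if pos then d <= D i else D i < d) then 1 else 0)
       * K (`|D i - d| / h).

Definition gram (pos : bool) : 'M[R]_2 :=
  \sum_i omega pos i *: (Rv i *m (Rv i)^T).

Definition llobj (pos : bool) (V : 'I_n -> R) (b : 'cV[R]_2) : R :=
  \sum_i omega pos i * (V i - sc ((Rv i)^T *m b)) ^+ 2.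

Definition is_llfit (pos : bool) (V : 'I_n -> R) (beta : 'cV[R]_2) : Prop :=
  forall b : 'cV[R]_2, llobj pos V (H1 *m beta) <= llobj pos V b.

Definition iv_eq (pos : bool) (Y : 'I_n -> R) (W Z : 'I_n -> 'cV[R]_q)
    (alpha : 'cV[R]_2) (gamma : 'cV[R]_q) : Prop :=
  n%:R^-1 *: \sum_i omega pos i *:
     ((Y i - sc ((Rv i)^T *m H1 *m alpha) - sc ((W i)^T *m gamma))
        *: col_mx (Rv i) (Z i))
  = 0 :> 'cV[R]_(2 + q).

Definition Yperp (Y : 'I_n -> R) (i : 'I_n) : R :=
  Y i - sc ((Rv i)^T *m invmx (gram false)
              *m (\sum_j omega false j *: (Y j *: Rv j))).

(* W_i^perp, a column vector whose transpose is the formula of the paper *)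
Definition Wperp (W : 'I_n -> 'cV[R]_q) (i : 'I_n) : 'cV[R]_q :=
  ((W i)^T - (Rv i)^T *m invmx (gram false)
              *m (\sum_j omega false j *: (Rv j *m (W j)^T)))^T.

End PDD.

From mathcomp Require Import all_boot all_order all_algebra.
From mathcomp Require Import ring lra.
Set Implicit Arguments. Unset Strict Implicit. Unset Printing Implicit Defensive.
Import Order.TTheory GRing.Theory Num.Theory.
Local Open Scope ring_scope.

(* On either side of the cutoff, the R_{i,1}-block of the local IV equations
   says that H_1 alpha + beta^w gamma solves the normal equations of the
   local linear fit of Y; hence H_1 alpha = H_1 (beta^y - beta^w gamma) and
   alpha_0 = beta^y_0 - (beta^w_0)^T gamma.  Substituting these intercepts,
   tau_pdd collapses to tau^y_rdd - (tau^w_rdd)^T gamma_-.  Plugging the same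
   expression for alpha_- into the IV residual turns it into
   Y^perp_i - (W^perp_i)^T gamma_-, and the Z_i-block of the IV equations
   becomes the linear system defining gamma_-. *)

Lemma eq0_of_quadratic_ge0 (R : realFieldType) (Q L : R) :
  (forall t, 0 <= t ^+ 2 * Q - 2 * t * L) -> L = 0.
Proof.
move=> H.
have c_gt0 : 0 < `|Q| + 1 by rewrite ltr_wpDl.
have Q_lt : Q - 2 * (`|Q| + 1) < 0 by have := ler_norm Q; lra.
move: (`|Q| + 1) c_gt0 Q_lt => c c_gt0 Q_lt.
have := H (L / c); rewrite -(pmulr_lge0 _ (exprn_gt0 2 c_gt0)).
have -> : ((L / c) ^+ 2 * Q - 2 * (L / c) * L) * c ^+ 2 = L ^+ 2 * (Q - 2 * c).
  by field; rewrite gt_eqF.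
rewrite (nmulr_lge0 _ Q_lt) => L2_le0.
by apply/eqP; rewrite -sqrf_eq0 eq_le L2_le0 sqr_ge0.
Qed.

Lemma sc_scale (R : realFieldType) m (a : 'M[R]_1) (u : 'cV[R]_m) :
  sc a *: u = u *m a.
Proof. by rewrite /sc {2}(mx11_scalar a) mul_mx_scalar. Qed.

Section WeightedLeastSquares.
Variables (R : realFieldType) (I : finType) (m : nat).
Variables (w : I -> R) (r : I -> 'cV[R]_m) (V : I -> R).

Definition wls_obj (b : 'cV[R]_m) : R :=
  \sum_i w i * (V i - sc ((r i)^T *m b)) ^+ 2.

Lemma wls_score_eq0 b0 : (forall b, wls_obj b0 <= wls_obj b) ->
  \sum_i w i *: ((V i - sc ((r i)^T *m b0)) *: r i) = 0.
Proof.
move=> b0_min; apply/matrixP => k j; rewrite (ord1 j) summxE mxE.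
under eq_bigr do rewrite !mxE.
apply: (@eq0_of_quadratic_ge0 _ (\sum_i w i * r i k 0 ^+ 2)) => t.
have shift i : sc ((r i)^T *m (b0 + t *: delta_mx k 0))
               = sc ((r i)^T *m b0) + t * r i k 0.
  by rewrite mulmxDr -scalemxAr -colE /sc !mxE.
have <- : wls_obj (b0 + t *: delta_mx k 0) - wls_obj b0 =
          t ^+ 2 * (\sum_i w i * r i k 0 ^+ 2)
          - 2 * t * \sum_i w i * ((V i - sc ((r i)^T *m b0)) * r i k 0).
  rewrite /wls_obj -sumrB !mulr_sumr -sumrB; apply: eq_bigr => i _.
  by rewrite shift; ring.
by rewrite subr_ge0.
Qed.

Lemma wls_normal_eq b0 : (forall b, wls_obj b0 <= wls_obj b) ->
  (\sum_i w i *: (r i *m (r i)^T)) *m b0 = \sum_i w i *: (V i *: r i).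
Proof.
move/wls_score_eq0; under eq_bigr do rewrite scalerBl scalerBr.
rewrite sumrB => /subr0_eq ->.
rewrite mulmx_suml; apply: eq_bigr => i _.
by rewrite sc_scale -scalemxAl mulmxA.
Qed.

End WeightedLeastSquares.

Lemma wls_normal_eq_mx (R : realFieldType) (I : finType) m q
    (w : I -> R) (r : I -> 'cV[R]_m) (W : I -> 'cV[R]_q) (B : 'M[R]_(m, q)) :
  (forall j b, wls_obj w r (fun i => W i j 0) (col j B)
               <= wls_obj w r (fun i => W i j 0) b) ->
  (\sum_i w i *: (r i *m (r i)^T)) *m B = \sum_i w i *: (r i *m (W i)^T).
Proof.
move=> B_min; apply/matrixP => k j.
have /matrixP/(_ k 0) := wls_normal_eq (B_min j).
rewrite colE mulmxA -colE mxE => ->; rewrite !summxE; apply: eq_bigr => i _.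
by rewrite !mxE big_ord1 !mxE [W i j 0 * _]mulrC.
Qed.

Lemma H1_mulmx_row0 (R : realFieldType) (h : R) m (x : 'M[R]_(2, m)) j :
  (H1 h *m x) 0 j = x 0 j.
Proof. by rewrite mxE big_ord_recl big_ord1 !mxE /= mul1r mul0r addr0. Qed.

Section LocalFits.
Variables (R : realFieldType) (n q : nat) (K : R -> R) (h d : R) (D : 'I_n -> R).
Local Notation omega := (omega K h d D).
Local Notation gram := (gram K h d D).
Local Notation Rv := (Rv h d D).
Local Notation H1 := (H1 h).

Lemma n_gt0_of_gram_unit pos : gram pos \in unitmx -> (0 < n)%N.
Proof.
rewrite lt0n; apply: contraTneq => n0.
have -> : gram pos = 0 by apply: big1 => i; have := ltn_ord i; rewrite {2}n0.
by rewrite unitmxE det0 unitr0.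
Qed.

Lemma llfit_normal pos V beta : is_llfit K h d D pos V beta ->
  gram pos *m (H1 *m beta) = \sum_i omega pos i *: (V i *: Rv i).
Proof. exact: wls_normal_eq. Qed.

Lemma llfit_normal_mx pos (W : 'I_n -> 'cV[R]_q) bw :
  (forall j, is_llfit K h d D pos (fun i => W i j 0) (col j bw)) ->
  gram pos *m (H1 *m bw) = \sum_i omega pos i *: (Rv i *m (W i)^T).
Proof.
by move=> fit; apply: wls_normal_eq_mx => j; rewrite colE -mulmxA -colE; apply: fit.
Qed.

Definition iv_resid (pos : bool) (Y : 'I_n -> R) (W : 'I_n -> 'cV[R]_q)
    (alpha : 'cV[R]_2) (gamma : 'cV[R]_q) (i : 'I_n) : R :=
  Y i - sc ((Rv i)^T *m H1 *m alpha) - sc ((W i)^T *m gamma).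

Lemma iv_eq_orth pos Y W Z alpha gamma :
  (0 < n)%N -> iv_eq K h d D pos Y W Z alpha gamma ->
  \sum_i omega pos i *: (iv_resid pos Y W alpha gamma i *: Rv i) = 0 /\
  \sum_i omega pos i *: (iv_resid pos Y W alpha gamma i *: Z i) = 0.
Proof.
move=> n_gt0 /eqP; rewrite scaler_eq0 invr_eq0 pnatr_eq0 eqn0Ngt n_gt0 /=.
rewrite -[X in X == 0]vsubmxK col_mx_eq0 !raddf_sum => /andP[/eqP orthR /eqP orthZ].
split; [rewrite -[RHS]orthR | rewrite -[RHS]orthZ]; apply: eq_bigr => i _.
  by rewrite !scale_col_mx /= col_mxKu.
by rewrite !scale_col_mx /= col_mxKd.
Qed.

Lemma iv_normal_eq pos Y W alpha gamma :
  \sum_i omega pos i *: (iv_resid pos Y W alpha gamma i *: Rv i) = 0 ->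
  gram pos *m (H1 *m alpha) = \sum_i omega pos i *: (Y i *: Rv i)
                            - (\sum_i omega pos i *: (Rv i *m (W i)^T)) *m gamma.
Proof.
have -> : \sum_i omega pos i *: (iv_resid pos Y W alpha gamma i *: Rv i)
  = \sum_i omega pos i *: (Y i *: Rv i)
    - (\sum_i omega pos i *: (Rv i *m (W i)^T)) *m gamma
    - gram pos *m (H1 *m alpha).
  rewrite /gram !mulmx_suml -!sumrB; apply: eq_bigr => i _.
  by rewrite -!scalemxAl -!scalerBr /iv_resid !scalerBl !sc_scale !mulmxA addrAC.
by move/subr0_eq.
Qed.

Lemma iv_intercept pos Y (W Z : 'I_n -> 'cV[R]_q) alpha gamma beta_y beta_w :
  gram pos \in unitmx ->
  is_llfit K h d D pos Y beta_y ->
  (forall j, is_llfit K h d D pos (fun i => W i j 0) (col j beta_w)) ->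
  iv_eq K h d D pos Y W Z alpha gamma ->
  alpha 0 0 = beta_y 0 0 - sc (row 0 beta_w *m gamma).
Proof.
move=> G_unit fitY fitW iv.
have [orthR _] := iv_eq_orth (n_gt0_of_gram_unit G_unit) iv.
have : H1 *m alpha = H1 *m (beta_y - beta_w *m gamma).
  apply: (can_inj (mulKmx G_unit)).
  rewrite (iv_normal_eq orthR) -(llfit_normal fitY) -(llfit_normal_mx fitW).
  by rewrite !mulmxBr !mulmxA.
move/(congr1 (fun M : 'cV_2 => M 0 0)).
by rewrite /sc -row_mul !H1_mulmx_row0 => ->; rewrite !mxE.
Qed.

Lemma iv_resid_perp Y W alpha gamma i :
  gram false \in unitmx ->
  \sum_j omega false j *: (iv_resid false Y W alpha gamma j *: Rv j) = 0 ->
  iv_resid false Y W alpha gamma i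
  = Yperp K h d D Y i - sc ((Wperp K h d D W i)^T *m gamma).
Proof.
move=> G_unit /iv_normal_eq G_alpha.
have alphaE : H1 *m alpha = invmx (gram false) *m
    (\sum_j omega false j *: (Y j *: Rv j)
     - (\sum_j omega false j *: (Rv j *m (W j)^T)) *m gamma).
  by rewrite -G_alpha mulKmx.
rewrite /iv_resid -mulmxA alphaE /Yperp /Wperp trmxK !mulmxBr !mulmxBl !mulmxA /sc !mxE.
ring.
Qed.

Lemma iv_slope_perp Y (W Z : 'I_n -> 'cV[R]_q) alpha gamma :
  gram false \in unitmx ->
  (n%:R^-1 *: \sum_i omega false i *: (Z i *m (Wperp K h d D W i)^T)) \in unitmx ->
  iv_eq K h d D false Y W Z alpha gamma ->
  gamma = invmx (n%:R^-1 *: \sum_i omega false i *: (Z i *m (Wperp K h d D W i)^T))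
          *m (n%:R^-1 *: \sum_i omega false i *: (Yperp K h d D Y i *: Z i)).
Proof.
move=> G_unit ZW_unit iv.
have [orthR orthZ] := iv_eq_orth (n_gt0_of_gram_unit G_unit) iv.
have -> : \sum_i omega false i *: (Yperp K h d D Y i *: Z i)
          = (\sum_i omega false i *: (Z i *m (Wperp K h d D W i)^T)) *m gamma.
  apply/subr0_eq; rewrite mulmx_suml -sumrB -[RHS]orthZ; apply: eq_bigr => i _.
  rewrite (iv_resid_perp _ G_unit orthR) [in RHS]scalerBl [in RHS]scalerBr.
  by rewrite [in RHS]sc_scale -scalemxAl mulmxA.
by rewrite [n%:R^-1 *: (_ *m gamma)]scalemxAl mulKmx.
Qed.

End LocalFits.

Theorem proposition1 (R : realFieldType) (n q : nat)
    (Y D : 'I_n -> R) (W Z : 'I_n -> 'cV[R]_q)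
    (K : R -> R) (h d : R)
    (hK : forall x, 0 <= K x) (hh : 0 < h)
    (* local linear fits: beta^y_{+}, beta^y_{-}, and beta^w_{+}, beta^w_{-}
       whose j-th column is the fit for w_j *)
    (by_p by_m : 'cV[R]_2) (bw_p bw_m : 'M[R]_(2, q))
    (alpha_p alpha_m : 'cV[R]_2) (gamma_p gamma_m : 'cV[R]_q)
    (* invertibility assumptions *)
    (Gp_inv : gram K h d D true \in unitmx)
    (Gm_inv : gram K h d D false \in unitmx)
    (ZW_inv : (n%:R^-1 *: \sum_i omega K h d D false i *:
                 (Z i *m (Wperp K h d D W i)^T)) \in unitmx)
    (* definitions of the estimators *)
    (fit_yp : is_llfit K h d D true Y by_p)
    (fit_ym : is_llfit K h d D false Y by_m)
    (fit_wp : forall j : 'I_q, is_llfit K h d D true (fun i => W i j ord0) (col j bw_p))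
    (fit_wm : forall j : 'I_q, is_llfit K h d D false (fun i => W i j ord0) (col j bw_m))
    (iv_p : iv_eq K h d D true Y W Z alpha_p gamma_p)
    (iv_m : iv_eq K h d D false Y W Z alpha_m gamma_m) :
  let bw_p0 : 'cV[R]_q := (row ord0 bw_p)^T in
  let bw_m0 : 'cV[R]_q := (row ord0 bw_m)^T in
  let tau_y := by_p ord0 ord0 - by_m ord0 ord0 in
  let tau_w : 'cV[R]_q := bw_p0 - bw_m0 in
  let tau_pdd := alpha_p ord0 ord0 + sc (bw_p0^T *m gamma_p)
                 - (alpha_m ord0 ord0 + sc (bw_p0^T *m gamma_m)) in
  tau_pdd = tau_y - sc (tau_w^T *m gamma_m)
  /\ gamma_m =
     invmx (n%:R^-1 *: \sum_i omega K h d D false i *: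
              (Z i *m (Wperp K h d D W i)^T))
     *m (n%:R^-1 *: \sum_i omega K h d D false i *:
              (Yperp K h d D Y i *: Z i)).
Proof.
move=> bw_p0 bw_m0 tau_y tau_w tau_pdd; split; last exact: (iv_slope_perp Gm_inv ZW_inv iv_m).
rewrite /tau_pdd /tau_y /tau_w /bw_p0 /bw_m0 raddfB /= !trmxK.
rewrite (iv_intercept Gp_inv fit_yp fit_wp iv_p) (iv_intercept Gm_inv fit_ym fit_wm iv_m).
by rewrite /sc mulmxBl !mxE; ring.
Qed.
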